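(* $\mathrm{GSym}=\mathrm{LWCQSym}$.
   Context: $\mathbb P$ and $\mathbb N$ denote positive and nonnegative integers. Let $X=\{x_i:i\in\mathbb P\}$ be commuting indeterminates. A left weak composition is a finite sequence $\alpha=(\alpha_1,\dots,\alpha_k)$ of nonnegative integers that is empty or has $\alpha_k>0$. For such $\alpha$, the left weak monomial quasisymmetric function is $M_\alpha=\sum_{0<i_1<\cdots<i_k}x_{i_1}^{\alpha_1}\cdots x_{i_k}^{\alpha_k}$, with $M_\emptyset=1$. $\mathrm{LWCQSym}$ is the $\mathbb Q$-span of all these $M_\alpha$ in $\mathbb Q[[X]]$. For a left weak composition $\alpha$ of length $k$ and $\beta\in\mathbb N^k$, $$\widehat M_{\binom{\alpha}{\beta}}=\sum_{0<i_1<\cdots<i_k}i_1^{\beta_1}\cdots i_k^{\beta_k}x_{i_1}^{\alpha_1}\cdots x_{i_k}^{\alpha_k}.$$ $\mathrm{GSym}$ is the $\mathbb Q$-span of all such $\widehat M_{\binom{\alpha}{\beta}}$. *)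

From mathcomp Require Import all_boot all_order all_algebra.
Set Implicit Arguments. Unset Strict Implicit. Unset Printing Implicit Defensive.
Import GRing.Theory Num.Theory.
Local Open Scope ring_scope.

(* Monomials in X = {x_1, x_2, ...}: a monomial is encoded by its list of
   exponents m = [:: e_1; ...; e_n], i.e. x_1^e_1 ... x_n^e_n (trailing zeros
   irrelevant). *)
Definition monomial := seq nat.
Definition series := monomial -> rat.

(* exponent of x_i (i >= 1) in m *)
Definition mexp (m : monomial) (i : nat) : nat := nth 0%N m i.-1.

Definition lwc (a : seq nat) : bool := (a == [::]) || (0 < last 0 a)%N.

(* Index sequences 0 < i_1 < ... < i_k (k = size a) with
   x_{i_1}^{a_1} ... x_{i_k}^{a_k} = x^m.  Any such sequence has
   i_k <= size m (as a_k > 0), so they are encoded as finite functions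
   'I_(size a) -> 'I_(size m).+1. *)
Definition matching (a : seq nat) (m : monomial)
    (s : {ffun 'I_(size a) -> 'I_(size m).+1}) : bool :=
  [&& [forall j : 'I_(size a), (0 < s j)%N],
      [forall j1 : 'I_(size a), forall j2 : 'I_(size a), (j1 < j2)%N ==> (s j1 < s j2)%N] &
      [forall i : 'I_(size m).+1,
         (0 < i)%N ==> (mexp m i == (\sum_(j | s j == i) nth 0%N a j)%N)]].

(* coefficient of x^m in M_a = sum_{0<i_1<...<i_k} x_{i_1}^{a_1}...x_{i_k}^{a_k} *)
Definition M (a : seq nat) : series := fun m =>
  (#|[pred s : {ffun 'I_(size a) -> 'I_(size m).+1} | matching s]|)%:R.

(* coefficient of x^m in Mhat_(a;b) =
   sum_{0<i_1<...<i_k} i_1^{b_1}...i_k^{b_k} x_{i_1}^{a_1}...x_{i_k}^{a_k} *)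
Definition Mhat (a b : seq nat) : series := fun m =>
  \sum_(s : {ffun 'I_(size a) -> 'I_(size m).+1} | matching s) \prod_(j < size a) ((s j : nat)%:R ^+ nth 0%N b j).

Definition LWCQSym (f : series) : Prop :=
  exists l : seq (rat * seq nat),
    (forall p, p \in l -> lwc p.2) /\
    forall m, f m = \sum_(p <- l) p.1 * M p.2 m.

Definition GSym (f : series) : Prop :=
  exists l : seq (rat * (seq nat * seq nat)),
    (forall p, p \in l -> lwc p.2.1 /\ size p.2.2 = size p.2.1) /\
    forall m, f m = \sum_(p <- l) p.1 * Mhat p.2.1 p.2.2 m.

From mathcomp Require Import all_boot all_order all_algebra ring.
Set Implicit Arguments. Unset Strict Implicit. Unset Printing Implicit Defensive.
Import GRing.Theory.

(* The coefficient of x^m in Mhat_(a;b) is a sum, over the placements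
   0 < i_1 < ... < i_n of the parts of a into m, of the polynomial weights
   i_1^b_1 ... i_n^b_n.  Shifting the variables by k and inducting on a, the
   first part sits at i_1 = k + t + 1, where m starts with t zeros.  Expanding
   a polynomial weight as P(k + t + 1) = sum_r Q_r(k) C(t, r) and reading
   C(t, r) as the number of ways of putting r zero parts among these t leading
   zeros turns every weighted count into a combination of the M_(0^r a_1 c)
   with coefficients polynomial in k; at k = 0 this writes Mhat_(a;b) as a
   rational combination of M_c with c left weak compositions.  Conversely
   M_a = Mhat_(a;0). *)

(* The monomial m is read on the variables x_(k+1), x_(k+2), ...: placements
   m a k lists the index sequences k < i_1 < ... < i_n with
   x_(i_1)^a_1 ... x_(i_n)^a_n = x^m shifted by k (see mem_placements). *)
Fixpoint placements (m a : seq nat) (k : nat) : seq (seq nat) :=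
  match m with
  | [::] => if a is [::] then [:: [::]] else [::]
  | m0 :: m' =>
      (if a is a0 :: a' then
         if m0 == a0 then map (cons k.+1) (placements m' a' k.+1) else [::]
       else [::])
      ++ (if m0 == 0 then placements m' a k.+1 else [::])
  end.

Definition exponent_at (a x : seq nat) (i : nat) : nat :=
  \sum_(j < size a) (if nth 0 x j == i then nth 0 a j else 0).

Definition is_placement (m a : seq nat) (k : nat) (x : seq nat) : bool :=
  [&& size x == size a, path ltn k x, all (fun i => i <= k + size m) x &
      m == map (exponent_at a x) (iota k.+1 (size m))].

Lemma exponent_at_cons a0 a x0 x i :
  exponent_at (a0 :: a) (x0 :: x) i = (if x0 == i then a0 else 0) + exponent_at a x i.
Proof. by rewrite /exponent_at big_ord_recl. Qed.

Lemma exponent_at_below a x k i : 0 < i <= k -> path ltn k x -> exponent_at a x i = 0.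
Proof.
case/andP=> i_gt0 le_ik; rewrite (path_sortedE ltn_trans) => /andP[/allP x_gtk _].
rewrite /exponent_at big1 // => j _; case: (ltnP j (size x)) => [lt_jx | ge_jx].
  by rewrite gtn_eqF // (leq_ltn_trans le_ik) // x_gtk // mem_nth.
by rewrite nth_default // eq_sym gtn_eqF.
Qed.

Lemma is_placement_nil a k x : is_placement [::] a k x = (x == [::]) && (a == [::]).
Proof.
rewrite /is_placement /= addn0 eqxx andbT.
case: x => [|x0 x] /=; first by rewrite andbT eq_sym size_eq0.
by case: ltnP; rewrite ?andbF.
Qed.

Lemma is_placement_cons_skip m0 m a k x :
  head 0 x != k.+1 ->
  is_placement (m0 :: m) a k x = (m0 == 0) && is_placement m a k.+1 x.
Proof.
move=> x0_neq; rewrite /is_placement /= addnS -addSn eqseq_cons.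
have path_x : path ltn k x = path ltn k.+1 x.
  by case: x x0_neq => //= x0 x /negbTE x0_neq; rewrite [k < x0]leq_eqVlt eq_sym x0_neq.
rewrite path_x; case px: (path ltn k.+1 x); rewrite ?andbF //=.
rewrite (@exponent_at_below _ _ k.+1 k.+1) ?leqnn //.
by case: (m0 == 0); rewrite ?andbF.
Qed.

Lemma is_placement_cons_first m0 m a0 a k x :
  is_placement (m0 :: m) (a0 :: a) k (k.+1 :: x) =
  (m0 == a0) && is_placement m a k.+1 x.
Proof.
rewrite /is_placement /= addnS -addSn eqseq_cons ltnSn eqSS exponent_at_cons eqxx leq_addr.
case px: (path ltn k.+1 x); rewrite ?andbF //=.
rewrite (@exponent_at_below _ _ k.+1 k.+1) ?leqnn // addn0.
have -> : map (exponent_at (a0 :: a) (k.+1 :: x)) (iota k.+2 (size m)) =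
          map (exponent_at a x) (iota k.+2 (size m)).
  apply/eq_in_map => i; rewrite mem_iota exponent_at_cons => /andP[lt_ki _].
  by rewrite ltn_eqF.
by case: (m0 == a0); rewrite ?andbF.
Qed.

Lemma mem_placements m a k x : (x \in placements m a k) = is_placement m a k x.
Proof.
elim: m a k x => [|m0 m IHm] a k x.
  by rewrite is_placement_nil; case: a => [|a0 a]; rewrite ?inE ?andbF ?andbT.
rewrite /= mem_cat.
have -> : (x \in if m0 == 0 then placements m a k.+1 else [::]) =
          (m0 == 0) && is_placement m a k.+1 x.
  by case: eqP => _; rewrite ?IHm.
have [x_first | x_skip] := eqVneq (head 0 x) k.+1; last first.
  rewrite is_placement_cons_skip // orb_idl //.
  case: a => [|a0 a]; case: eqP => // _ /mapP[y _ x_def].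
  by rewrite x_def /= eqxx in x_skip.
case: x x_first => [|x0 x] //= ->.
have -> : is_placement m a k.+1 (k.+1 :: x) = false by rewrite /is_placement /= ltnn andbF.
rewrite andbF orbF; case: a => [|a0 a]; first by rewrite /is_placement.
rewrite is_placement_cons_first; case: eqP => _ //=.
by rewrite mem_map ?IHm //; move=> ? ? [].
Qed.

Lemma uniq_placements m a k : uniq (placements m a k).
Proof.
elim: m a k => [|m0 m IHm] a k; first by case: a.
rewrite /= cat_uniq; apply/and3P; split.
- case: a => [|a0 a] //; case: eqP => _ //.
  by rewrite map_inj_uniq // => ? ? [].
- apply/hasPn => x; case: eqP => _ //; rewrite mem_placements => /and3P[_ path_x _].
  case: a => [|a0 a] //; case: eqP => _ //; apply/mapP => -[y _ x_def].
  by rewrite x_def /= ltnn in path_x.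
- by case: eqP.
Qed.

Section Positions.

Variables (n N : nat).

Definition positions (s : {ffun 'I_n -> 'I_N}) : seq nat := [seq nat_of_ord (s j) | j <- enum 'I_n].

Lemma size_positions s : size (positions s) = n.
Proof. by rewrite size_map size_enum_ord. Qed.

Lemma nth_positions s (j : 'I_n) : nth 0 (positions s) j = s j.
Proof. by rewrite (nth_map j) ?size_enum_ord // nth_ord_enum. Qed.

Lemma positions_inj : injective positions.
Proof. by move=> s1 s2 eq_s; apply/ffunP => j; apply: val_inj; rewrite /= -!nth_positions eq_s. Qed.

End Positions.

Lemma exponent_at_positions (a m : seq nat) (s : {ffun 'I_(size a) -> 'I_(size m).+1}) i :
  exponent_at a (positions s) i = \sum_(j | s j == i :> nat) nth 0 a j.
Proof. by rewrite /exponent_at [RHS]big_mkcond; apply: eq_bigr => j _; rewrite nth_positions. Qed.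

Lemma matching_placement (a m : seq nat) (s : {ffun 'I_(size a) -> 'I_(size m).+1}) :
  matching s = is_placement m a 0 (positions s).
Proof.
rewrite /matching /is_placement size_positions eqxx /=.
have -> : all (fun i => i <= size m) (positions s).
  by apply/allP => _ /mapP[j _ ->]; rewrite -ltnS.
rewrite andTb (path_sortedE ltn_trans) (sorted_pairwise ltn_trans) -andbA.
congr [&& _, _ & _].
- apply/forallP/allP => [s_gt0 _ /mapP[j _ ->] | pos_gt0 j]; first exact: s_gt0.
  by apply: pos_gt0; apply: map_f; rewrite mem_enum.
- apply/forallP/(pairwiseP 0) => [s_incr i j | pos_incr j1].
    rewrite !inE size_positions => lt_i lt_j lt_ij.
    have /forallP/(_ (Ordinal lt_j))/implyP/(_ lt_ij) := s_incr (Ordinal lt_i).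
    by rewrite -(nth_positions s (Ordinal lt_i)) -(nth_positions s (Ordinal lt_j)).
  apply/forallP => j2; apply/implyP => lt_j12.
  by rewrite -!nth_positions pos_incr ?inE ?size_positions.
- apply/forallP/eqP => [m_exp | m_def i].
    apply: (@eq_from_nth _ 0); rewrite ?size_map ?size_iota // => i lt_im.
    rewrite (nth_map 0) ?size_iota // nth_iota // add1n exponent_at_positions.
    have /implyP/(_ isT) := m_exp (Ordinal (lt_im : i.+1 < (size m).+1)).
    by rewrite /mexp => /eqP.
  apply/implyP => i_gt0; have lt_im : i.-1 < size m by rewrite -ltnS prednK.
  have -> : mexp m i = exponent_at a (positions s) i.
    by rewrite /mexp {1}m_def (nth_map 0) ?size_iota // nth_iota // add1n prednK.
  by rewrite exponent_at_positions.
Qed.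

Lemma sum_matching (R : nmodType) (a m : seq nat) (W : seq nat -> R) :
  (\sum_(s : {ffun 'I_(size a) -> 'I_(size m).+1} | matching s) W (positions s))%R =
  (\sum_(x <- placements m a 0) W x)%R.
Proof.
rewrite -big_filter -(big_map (@positions _ _) xpredT W).
apply: perm_big; apply: uniq_perm.
- by rewrite map_inj_uniq ?filter_uniq ?index_enum_uniq //; exact: positions_inj.
- exact: uniq_placements.
move=> x; rewrite mem_placements; apply/mapP/idP => [[s] | x_pl].
  by rewrite mem_filter => /andP[s_match _] ->; rewrite -matching_placement.
case/and4P: (x_pl) => /eqP size_x _ /allP x_le _.
pose s := [ffun j : 'I_(size a) => inord (nth 0 x j) : 'I_(size m).+1].
have pos_s : positions s = x.
  apply: (@eq_from_nth _ 0) => [|i]; rewrite size_positions ?size_x // => lt_ia.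
  rewrite (nth_positions s (Ordinal lt_ia)) ffunE inordK // ltnS.
  by apply: x_le; rewrite mem_nth ?size_x.
by exists s; rewrite // mem_filter mem_index_enum andbT matching_placement pos_s.
Qed.

Local Open Scope ring_scope.

Definition weight (w : nat -> {poly rat}) (x : seq nat) : rat :=
  \prod_(j < size x) (w j).[(nth 0%N x j)%:R].

Definition wcount (a : seq nat) (w : nat -> {poly rat}) (m : seq nat) (k : nat) : rat :=
  \sum_(x <- placements m a k) weight w x.

Fixpoint Mrec (c m : seq nat) {struct m} : rat :=
  match m with
  | [::] => (c == [::])%:R
  | m0 :: m' => (if c is c0 :: c' then (m0 == c0)%:R * Mrec c' m' else 0)
                + (m0 == 0%N)%:R * Mrec c m'
  end.

Lemma weight_cons w x0 x : weight w (x0 :: x) = (w 0%N).[x0%:R] * weight (fun j => w j.+1) x.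
Proof. by rewrite /weight big_ord_recl. Qed.

Lemma wcount_nil a w k : wcount a w [::] k = (a == [::])%:R.
Proof. by case: a => [|a0 a]; rewrite /wcount /= ?big_nil // big_seq1 /weight big_ord0. Qed.

Lemma wcount_cons a w m0 m k :
  wcount a w (m0 :: m) k =
  (if a is a0 :: a' then (m0 == a0)%:R * ((w 0%N).[k.+1%:R] * wcount a' (fun j => w j.+1) m k.+1)
   else 0)
  + (m0 == 0%N)%:R * wcount a w m k.+1.
Proof.
rewrite /wcount /= big_cat; congr (_ + _).
  case: a => [|a0 a]; first by rewrite big_nil.
  case: eqP => _; last by rewrite big_nil mul0r.
  by rewrite big_map mul1r mulr_sumr; under eq_bigr do rewrite weight_cons.
by case: eqP => _; rewrite ?big_nil ?mul0r ?mul1r.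
Qed.

Lemma wcount_unweighted c m k : wcount c (fun=> 1) m k = Mrec c m.
Proof.
elim: m c k => [|m0 m IHm] c k; first by rewrite wcount_nil.
rewrite wcount_cons /= IHm; case: c => [|c0 c] //.
by rewrite IHm hornerC mul1r.
Qed.

Lemma wcount_no_parts w m k : wcount [::] w m k = Mrec [::] m.
Proof. by elim: m k => [|m0 m IHm] k; rewrite ?wcount_nil // wcount_cons IHm. Qed.

Definition zeros_then (t a0 : nat) (m : seq nat) : rat :=
  (all (pred1 0%N) (take t m) && (nth 0%N m t == a0))%:R.

Lemma zeros_then0 a0 m0 m : zeros_then 0%N a0 (m0 :: m) = (m0 == a0)%:R.
Proof. by []. Qed.

Lemma zeros_thenS t a0 m0 m : zeros_then t.+1 a0 (m0 :: m) = (m0 == 0%N)%:R * zeros_then t a0 m.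
Proof. by rewrite /zeros_then /=; case: (m0 == 0%N); rewrite ?mul1r ?mul0r. Qed.

Lemma wcount_first_part a0 a w m k :
  wcount (a0 :: a) w m k =
  \sum_(t < size m) zeros_then t a0 m *
     ((w 0%N).[(k + t)%N.+1%:R] * wcount a (fun j => w j.+1) (drop t.+1 m) (k + t)%N.+1).
Proof.
elim: m k => [|m0 m IHm] k; first by rewrite wcount_nil big_ord0.
rewrite wcount_cons big_ord_recl zeros_then0 addn0 /= drop0; congr (_ + _).
rewrite IHm mulr_sumr; apply: eq_bigr => t _.
by rewrite zeros_thenS /bump /= add1n addnS -addSn mulrA.
Qed.

Lemma Mrec_cons c m0 m :
  Mrec c (m0 :: m) =
  (if c is c0 :: c' then (m0 == c0)%:R * Mrec c' m else 0) + (m0 == 0%N)%:R * Mrec c m.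
Proof. by []. Qed.

(* 'C(t, r) counts the ways to place the r leading zero parts among the t
   leading zeros of m. *)
Lemma Mrec_zeros_cons r a0 c m :
  Mrec (nseq r 0%N ++ a0 :: c) m =
  \sum_(t < size m) zeros_then t a0 m * ('C(t, r)%:R * Mrec c (drop t.+1 m)).
Proof.
elim: m r => [|m0 m IHm] r; first by case: r => [|r]; rewrite /= big_ord0.
rewrite big_ord_recl -/(size m) zeros_then0 Mrec_cons.
under eq_bigr => t _ do rewrite lift0 zeros_thenS -mulrA.
rewrite -mulr_sumr; case: r => [|r] /=; rewrite drop0.
  rewrite bin0 mul1r (IHm 0%N).
  by congr (_ + _ * _); apply: eq_bigr => t _; rewrite !bin0.
rewrite bin0n mul0r mulr0 add0r -mulrDr (IHm r) (IHm r.+1); congr (_ * _).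
under [RHS]eq_bigr => t _ do rewrite binS natrD mulrDl mulrDr.
by rewrite big_split addrC.
Qed.

Lemma mul_bin_succ t r : (t * 'C(t, r) = r.+1 * 'C(t, r.+1) + r * 'C(t, r))%N.
Proof.
rewrite mul_bin_left -mulnDl; case: (leqP r t) => [le_rt | lt_tr].
  by rewrite subnK.
by rewrite bin_small ?muln0.
Qed.

Section ShiftBinomialExpansion.

Variable R : comRingType.

Lemma binomial_expansion_mul_shift (L : seq ({poly R} * nat)) :
  exists L' : seq ({poly R} * nat), forall k t : nat,
    (\sum_(p <- L) p.1.[k%:R] * 'C(t, p.2)%:R) * (k + t)%N.+1%:R =
    \sum_(p <- L') p.1.[k%:R] * 'C(t, p.2)%:R.
Proof.
elim: L => [|[Q r] L [L' IHL]]; first by exists [::] => k t; rewrite !big_nil mul0r.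
(* (k + t + 1) C(t, r) = (k + 1) C(t, r) + (r + 1) C(t, r + 1) + r C(t, r) *)
exists [:: (Q * ('X + 1), r), (Q * r.+1%:R%:P, r.+1), (Q * r%:R%:P, r) & L'] => k t.
rewrite !big_cons -IHL mulrDl !addrA; congr (_ + _) => /=.
have shift_bin : ((k + t).+1 * 'C(t, r) = k.+1 * 'C(t, r) + (r.+1 * 'C(t, r.+1) + r * 'C(t, r)))%N.
  by rewrite -mul_bin_succ -mulnDl addSn.
rewrite -mulrA [_ * (k + t)%N.+1%:R]mulrC -natrM shift_bin !hornerE -!mulrA -!mulrDr.
by congr (_ * _); rewrite !natrD !natrM; ring.
Qed.

Lemma shift_binomial_expansion (P : {poly R}) :
  exists L : seq ({poly R} * nat), forall k t : nat,
    P.[(k + t)%N.+1%:R] = \sum_(p <- L) p.1.[k%:R] * 'C(t, p.2)%:R.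
Proof.
elim/poly_ind: P => [|P c [L IHP]]; first by exists [::] => k t; rewrite big_nil horner0.
have [L' IHL'] := binomial_expansion_mul_shift L.
exists ((c%:P, 0%N) :: L') => k t.
by rewrite hornerMXaddC IHP IHL' big_cons hornerC bin0 mulr1 addrC.
Qed.

End ShiftBinomialExpansion.

Definition Mrec_expansion (good : seq nat -> Prop) (G : nat -> seq nat -> rat) : Prop :=
  exists l : seq ({poly rat} * seq nat), (forall p, p \in l -> good p.2) /\
    forall k m, G k m = \sum_(p <- l) p.1.[k%:R] * Mrec p.2 m.

Lemma Mrec_expansion_eq good G G' :
  (forall k m, G k m = G' k m) -> Mrec_expansion good G' -> Mrec_expansion good G.
Proof. by move=> eqG [l [l_good G'E]]; exists l; split=> // k m; rewrite eqG. Qed.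

Lemma Mrec_expansion_sum (I : eqType) (s : seq I) good (G : I -> nat -> seq nat -> rat) :
  (forall i, i \in s -> Mrec_expansion good (G i)) ->
  Mrec_expansion good (fun k m => \sum_(i <- s) G i k m).
Proof.
elim: s => [|i s IHs] Gs; first by exists [::]; split=> // k m; rewrite !big_nil.
have [|l [l_good GsE]] := IHs; first by move=> j j_s; apply: Gs; rewrite inE j_s orbT.
have [li [li_good GiE]] := Gs i (mem_head i s).
exists (li ++ l); split=> [p|k m]; first by rewrite mem_cat => /orP[/li_good|/l_good].
by rewrite big_cons big_cat GiE GsE.
Qed.

Lemma Mrec_expansion_zeros_cons good a0 c (P : {poly rat}) :
  (forall r, good (nseq r 0%N ++ a0 :: c)) ->
  Mrec_expansion good (fun k m =>
    \sum_(t < size m) zeros_then t a0 m * (P.[(k + t)%N.+1%:R] * Mrec c (drop t.+1 m))).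
Proof.
move=> good_pad; have [L PE] := shift_binomial_expansion P.
exists [seq (p.1, nseq p.2 0%N ++ a0 :: c) | p <- L]; split.
  by move=> _ /mapP[p _ ->]; apply: good_pad.
move=> k m; rewrite big_map.
under [LHS]eq_bigr => t _ do rewrite PE mulr_suml mulr_sumr.
rewrite exchange_big /=; apply: eq_bigr => p _.
rewrite Mrec_zeros_cons mulr_sumr; apply: eq_bigr => t _.
by rewrite -mulrA mulrCA.
Qed.

Lemma lwc_behead a0 a : lwc (a0 :: a) -> lwc a.
Proof. by rewrite /lwc; case: a => //= a1 a ->; rewrite orbT. Qed.

Lemma lwc_zeros_cons r a0 a c :
  lwc (a0 :: a) -> lwc c -> (size a <= size c)%N -> lwc (nseq r 0%N ++ a0 :: c).
Proof.
rewrite /lwc last_cat /=; case: c => [|c0 c] /=; last by move=> _ ->; rewrite orbT.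
by case: a => [|? ?] // a0_gt0 _ _; rewrite a0_gt0 orbT.
Qed.

(* The bound on size c records that c is nonempty whenever a is, which is what
   keeps nseq r 0 ++ a0 :: c a left weak composition. *)
Lemma wcount_Mrec_expansion a w :
  lwc a -> Mrec_expansion (fun c => lwc c /\ (size a <= size c)%N) (fun k m => wcount a w m k).
Proof.
elim: a w => [|a0 a IHa] w lwc_a.
  exists [:: (1, [::])]; split=> [p | k m]; first by rewrite inE => /eqP ->.
  by rewrite big_seq1 hornerC mul1r wcount_no_parts.
have [l [l_good wcountE]] := IHa (fun j => w j.+1) (lwc_behead lwc_a).
pose G k m := \sum_(p <- l) \sum_(t < size m) zeros_then t a0 m *
    ((w 0%N * p.1).[(k + t)%N.+1%:R] * Mrec p.2 (drop t.+1 m)).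
apply: (@Mrec_expansion_eq _ _ G) => [k m | ].
  rewrite wcount_first_part /G exchange_big; apply: eq_bigr => t _ /=.
  rewrite wcountE !mulr_sumr; apply: eq_bigr => p _.
  by rewrite hornerM -!mulrA.
apply: Mrec_expansion_sum => p p_l; apply: Mrec_expansion_zeros_cons => r.
have [lwc_p size_p] := l_good p p_l; split; first exact: lwc_zeros_cons lwc_a lwc_p size_p.
by rewrite size_cat /= addnS ltnS (leq_trans size_p) ?leq_addl.
Qed.

Lemma Mhat_wcount a b m : Mhat a b m = wcount a (fun j => 'X^(nth 0%N b j)) m 0%N.
Proof.
rewrite /Mhat /wcount -sum_matching; apply: eq_bigr => s _.
rewrite /weight size_positions; apply: eq_bigr => j _.
by rewrite hornerXn nth_positions.
Qed.

Lemma M_Mrec c m : M c m = Mrec c m.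
Proof.
rewrite /M -(wcount_unweighted c m 0%N) /wcount -sum_matching -sum1_card natr_sum.
by apply: eq_big => // s _; rewrite /weight big1 // => j _; rewrite hornerC.
Qed.

Lemma Mhat_zero_exponents a m : Mhat a (nseq (size a) 0%N) m = M a m.
Proof.
rewrite /Mhat /M -sum1_card natr_sum; apply: eq_big => // s _.
by rewrite big1 // => j _; rewrite nth_nseq if_same expr0.
Qed.

Lemma LWCQSym_lincomb (I : eqType) (s : seq I) (c : I -> rat) (g : I -> series) (f : series) :
  (forall i, i \in s -> LWCQSym (g i)) ->
  (forall m, f m = \sum_(i <- s) c i * g i m) -> LWCQSym f.
Proof.
elim: s f => [|i s IHs] f gs fE; first by exists [::]; split=> // m; rewrite fE !big_nil.
have [|l [l_lwc lE]] := IHs (fun m => \sum_(j <- s) c j * g j m) _ (fun=> erefl).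
  by move=> j j_s; apply: gs; rewrite inE j_s orbT.
have [li [li_lwc liE]] := gs i (mem_head i s).
exists ([seq (c i * p.1, p.2) | p <- li] ++ l); split=> [p | m].
  by rewrite mem_cat => /orP[/mapP[q /li_lwc ? ->] | /l_lwc].
rewrite fE big_cons big_cat big_map -lE liE mulr_sumr; congr (_ + _).
by apply: eq_bigr => p _; rewrite mulrA.
Qed.

Lemma LWCQSym_M c : lwc c -> LWCQSym (M c).
Proof.
move=> lwc_c; exists [:: (1, c)]; split=> [p | m]; last by rewrite big_seq1 mul1r.
by rewrite inE => /eqP ->.
Qed.

Lemma LWCQSym_Mhat a b : lwc a -> LWCQSym (Mhat a b).
Proof.
move=> lwc_a; have [l [l_good MhatE]] := wcount_Mrec_expansion (fun j => 'X^(nth 0%N b j)) lwc_a.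
apply: (@LWCQSym_lincomb _ l (fun p => p.1.[0]) (fun p => M p.2)) => [p /l_good[lwc_p _] | m].
  exact: LWCQSym_M.
by rewrite Mhat_wcount MhatE; apply: eq_bigr => p _; rewrite M_Mrec.
Qed.

Theorem proposition5p6 : forall f : series, GSym f <-> LWCQSym f.
Proof.
move=> f; split=> [[l [l_good fE]] | [l [l_lwc fE]]].
  apply: (LWCQSym_lincomb (c := fst) _ fE) => p /l_good[lwc_p _].
  exact: LWCQSym_Mhat.
exists [seq (p.1, (p.2, nseq (size p.2) 0%N)) | p <- l]; split.
  by move=> _ /mapP[p /l_lwc lwc_p ->]; rewrite size_nseq.
by move=> m; rewrite fE big_map; apply: eq_bigr => p _; rewrite Mhat_zero_exponents.
Qed.
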